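(* Let $X$ be a set of cardinality at least $2^{\aleph_0}$, considered as a discrete topological space. Then for every formula $A$ of $\mathcal{L}_\nabla$: (i) if $X\vDash_{i\mathbf{ST}}A$ then $i\mathbf{STL}\vdash A$; (ii) if $X\vDash_{i\mathbf{ST}(F)}A$ then $i\mathbf{STL}(F)\vdash A$; (iii) if $X\vDash_{i\mathbf{ST}(wF)}A$ then $i\mathbf{STL}(wF)\vdash A$.
   Context: Formulas of $\mathcal{L}_\nabla$ are built from variables and constants $1,\top,\bot$ by $\wedge,\vee,\otimes,\to$ and unary $\nabla$. Sequents $\Gamma\Rightarrow A$ have $\Gamma$ a finite sequence; $\nabla\Gamma$ applies $\nabla$ to each member; ''$L\vdash A$'' means $L$ derives $\Rightarrow A$. $\mathbf{STL}$ has axioms $A\Rightarrow A$, $\Rightarrow1$, $\nabla1\Rightarrow1$, $\Gamma\Rightarrow\top$, $\Gamma,\bot,\Sigma\Rightarrow A$ and rules (premises / conclusion): cut: $\Gamma\Rightarrow A$, $\Pi,A,\Sigma\Rightarrow B$ / $\Pi,\Gamma,\Sigma\Rightarrow B$; $L\wedge$: $\Gamma,A,\Sigma\Rightarrow C$ / $\Gamma,A\wedge B,\Sigma\Rightarrow C$ and $\Gamma,B,\Sigma\Rightarrow C$ / $\Gamma,A\wedge B,\Sigma\Rightarrow C$; $R\wedge$: $\Gamma\Rightarrow A$, $\Gamma\Rightarrow B$ / $\Gamma\Rightarrow A\wedge B$; $L\vee$: $\Gamma,A,\Sigma\Rightarrow C$, $\Gamma,B,\Sigma\Rightarrow C$ /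 $\Gamma,A\vee B,\Sigma\Rightarrow C$; $R\vee$: $\Gamma\Rightarrow A$ / $\Gamma\Rightarrow A\vee B$ and $\Gamma\Rightarrow B$ / $\Gamma\Rightarrow A\vee B$; $L1$: $\Gamma,\Sigma\Rightarrow A$ / $\Gamma,1,\Sigma\Rightarrow A$; $L\otimes$: $\Gamma,A,B,\Sigma\Rightarrow C$ / $\Gamma,A\otimes B,\Sigma\Rightarrow C$; $R\otimes$: $\Gamma\Rightarrow A$, $\Sigma\Rightarrow B$ / $\Gamma,\Sigma\Rightarrow A\otimes B$; $(\nabla)$: $A\Rightarrow B$ / $\nabla A\Rightarrow\nabla B$; Oplax: $\nabla A,\nabla B\Rightarrow C$ / $\nabla(A\otimes B)\Rightarrow C$; $L\to$: $\Gamma\Rightarrow A$, $\Pi,B,\Sigma\Rightarrow C$ / $\Pi,\Gamma,\nabla(A\to B),\Sigma\Rightarrow C$; $R\to$: $A,\nabla\Gamma\Rightarrow B$ / $\Gamma\Rightarrow A\to B$. Scheme $(F)$: $\Gamma\Rightarrow A$ / $\Gamma\Rightarrow\nabla A$; scheme $(wF)$: $\nabla A\Rightarrow\bot$ / $A\Rightarrow\bot$. $i\mathbf{STL}$ is $\mathbf{STL}$ plus left weakening, contraction and exchange; $i\mathbf{STL}(F)$, $i\mathbf{STL}(wF)$ add the respective scheme. For a space $Z$ and a union-preserving $\nabla:\mathcal{O}(Z)\to\mathcal{O}(Z)$, the implication is $W_1\to W_2=\Box(W_1\Rightarrow W_2)$ with $\Box$ the right adjoint of $\nabla$ and $\Rightarrow$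 the Heyting implication (equivalently $W_1\cap\nabla W_2\subseteq W_3$ iff $W_2\subseteq W_1\to W_3$). A valuation of variables in $\mathcal{O}(Z)$ extends by $1,\top\mapsto Z$, $\bot\mapsto\emptyset$, $\wedge,\otimes\mapsto\cap$, $\vee\mapsto\cup$, $\nabla\mapsto\nabla$, $\to\mapsto\to$. $i\mathbf{ST}$ is the class of all such $(\mathcal{O}(Z),\nabla)$, $i\mathbf{ST}(F)$ those with $W\subseteq\nabla W$, $i\mathbf{ST}(wF)$ those with $\nabla W=\emptyset\Rightarrow W=\emptyset$. $Z\vDash_{\mathcal{C}}A$ means $V(A)=Z$ for every $\nabla$ with $(\mathcal{O}(Z),\nabla)\in\mathcal{C}$ and every valuation $V$. *)

From Stdlib Require Import List.
Import ListNotations.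

Inductive formula : Type :=
| Var : nat -> formula
| One : formula
| Top : formula
| Bot : formula
| And : formula -> formula -> formula
| Or : formula -> formula -> formula
| Tens : formula -> formula -> formula
| Imp : formula -> formula -> formula
| Nab : formula -> formula.

Inductive scheme : Type := NoScheme | SchF | SchwF.

Inductive derives (s : scheme) : list formula -> formula -> Prop :=
| ax_id A : derives s [A] A
| ax_one : derives s [] One
| ax_nabone : derives s [Nab One] One
| ax_top G : derives s G Top
| ax_bot G S A : derives s (G ++ Bot :: S) A
| r_cut G P S A B :
    derives s G A -> derives s (P ++ A :: S) B -> derives s (P ++ G ++ S) B
| r_andL1 G S A B C :
    derives s (G ++ A :: S) C -> derives s (G ++ And A B :: S) C
| r_andL2 G S A B C :
    derives s (G ++ B :: S) C -> derives s (G ++ And A B :: S) C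
| r_andR G A B : derives s G A -> derives s G B -> derives s G (And A B)
| r_orL G S A B C :
    derives s (G ++ A :: S) C -> derives s (G ++ B :: S) C ->
    derives s (G ++ Or A B :: S) C
| r_orR1 G A B : derives s G A -> derives s G (Or A B)
| r_orR2 G A B : derives s G B -> derives s G (Or A B)
| r_oneL G S A : derives s (G ++ S) A -> derives s (G ++ One :: S) A
| r_tensL G S A B C :
    derives s (G ++ A :: B :: S) C -> derives s (G ++ Tens A B :: S) C
| r_tensR G S A B : derives s G A -> derives s S B -> derives s (G ++ S) (Tens A B)
| r_nab A B : derives s [A] B -> derives s [Nab A] (Nab B)
| r_oplax A B C : derives s [Nab A; Nab B] C -> derives s [Nab (Tens A B)] C
| r_impL G P S A B C :
    derives s G A -> derives s (P ++ B :: S) C ->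
    derives s (P ++ G ++ Nab (Imp A B) :: S) C
| r_impR G A B : derives s (A :: map Nab G) B -> derives s G (Imp A B)
| r_weak G S A C : derives s (G ++ S) C -> derives s (G ++ A :: S) C
| r_contr G S A C : derives s (G ++ A :: A :: S) C -> derives s (G ++ A :: S) C
| r_exch G S A B C : derives s (G ++ A :: B :: S) C -> derives s (G ++ B :: A :: S) C
| r_F G A : s = SchF -> derives s G A -> derives s G (Nab A)
| r_wF A : s = SchwF -> derives s [Nab A] Bot -> derives s [A] Bot.

Definition provable (s : scheme) (A : formula) : Prop := derives s [] A.

(** Semantics on the discrete space X: every subset is open, O(X) = X -> Prop. *)
Definition subset {X : Type} (U W : X -> Prop) : Prop := forall x, U x -> W x.

Definition union_preserving {X : Type} (nab : (X -> Prop) -> (X -> Prop)) : Prop :=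
  forall (I : Type) (F : I -> X -> Prop),
    nab (fun x => exists i, F i x) = (fun x => exists i, nab (F i) x).

(** Right adjoint of nabla: Box W = union of all (open) U with nab U <= W. *)
Definition box {X : Type} (nab : (X -> Prop) -> (X -> Prop)) (W : X -> Prop) : X -> Prop :=
  fun x => exists U : X -> Prop, subset (nab U) W /\ U x.

(** Heyting implication in the discrete topology (interior is the identity). *)
Definition heyting_imp {X : Type} (W1 W2 : X -> Prop) : X -> Prop :=
  fun x => W1 x -> W2 x.

Definition st_imp {X : Type} (nab : (X -> Prop) -> (X -> Prop)) (W1 W2 : X -> Prop)
  : X -> Prop := box nab (heyting_imp W1 W2).

Fixpoint interp {X : Type} (nab : (X -> Prop) -> (X -> Prop)) (V : nat -> X -> Prop)
  (A : formula) : X -> Prop :=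
  match A with
  | Var n => V n
  | One => fun _ => True
  | Top => fun _ => True
  | Bot => fun _ => False
  | And A B => fun x => interp nab V A x /\ interp nab V B x
  | Tens A B => fun x => interp nab V A x /\ interp nab V B x
  | Or A B => fun x => interp nab V A x \/ interp nab V B x
  | Nab A => nab (interp nab V A)
  | Imp A B => st_imp nab (interp nab V A) (interp nab V B)
  end.

Definition in_class {X : Type} (s : scheme) (nab : (X -> Prop) -> (X -> Prop)) : Prop :=
  union_preserving nab /\
  match s with
  | NoScheme => True
  | SchF => forall W : X -> Prop, subset W (nab W)
  | SchwF => forall W : X -> Prop, (forall x, ~ nab W x) -> (forall x, ~ W x)
  end.

Definition valid_on (X : Type) (s : scheme) (A : formula) : Prop :=
  forall (nab : (X -> Prop) -> (X -> Prop)) (V : nat -> X -> Prop),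
    in_class s nab -> forall x : X, interp nab V A x.

Definition card_ge_continuum (X : Type) : Prop :=
  exists f : (nat -> bool) -> X, forall a b, f a = f b -> a = b.

(* A canonical-model argument.  Formulas are countable, so a point of X can code
   an arbitrary set of formulas through the injection of [nat -> bool]; the
   canonical points code prime theories, related by [x R y] iff [Nab C] is in y
   whenever C is in x.  Interpreting [Nab] as the R-image operator preserves
   unions, and its right adjoint is the R-box, so [A -> B] holds at x iff every
   R-successor satisfying A satisfies B.  A Lindenbaum lemma for consistent
   pairs supplies the prime successors needed in the truth lemma; under (F) the
   relation is reflexive, and under (wF) serial because [Top -> Bot |- Bot]
   there.  A non-derivable formula then fails at the point coding a prime
   theory that avoids it. *)

From Stdlib Require Import List Lia Classical ClassicalEpsilon.
From Stdlib Require Import FunctionalExtensionality PropExtensionality.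
From Stdlib Require Cantor.
Import ListNotations.

Lemma cantor_to_nat_inj a b c d :
  Cantor.to_nat (a, b) = Cantor.to_nat (c, d) -> a = c /\ b = d.
Proof.
  intros E. apply (f_equal Cantor.of_nat) in E. rewrite !Cantor.cancel_of_to in E.
  now injection E.
Qed.

Fixpoint encode (A : formula) : nat :=
  match A with
  | Var n => Cantor.to_nat (0, n)
  | One => Cantor.to_nat (1, 0)
  | Top => Cantor.to_nat (2, 0)
  | Bot => Cantor.to_nat (3, 0)
  | And A B => Cantor.to_nat (4, Cantor.to_nat (encode A, encode B))
  | Or A B => Cantor.to_nat (5, Cantor.to_nat (encode A, encode B))
  | Tens A B => Cantor.to_nat (6, Cantor.to_nat (encode A, encode B))
  | Imp A B => Cantor.to_nat (7, Cantor.to_nat (encode A, encode B))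
  | Nab A => Cantor.to_nat (8, encode A)
  end.

Lemma encode_inj A B : encode A = encode B -> A = B.
Proof.
  revert B; induction A; intros [] E; cbn [encode] in E;
    apply cantor_to_nat_inj in E as [Etag E]; try discriminate; try reflexivity;
    try (apply cantor_to_nat_inj in E as [E1 E2]); f_equal; auto.
Qed.

Definition decode (n : nat) : formula := epsilon (inhabits Top) (fun A => encode A = n).

Lemma decode_encode A : decode (encode A) = A.
Proof.
  apply encode_inj, (epsilon_spec (inhabits Top) (fun B => encode B = encode A)).
  now exists A.
Qed.

Section DerivedRules.

Context {s : scheme}.
Local Notation "A |- B" := (derives s [A] B) (at level 70).

Lemma seq_cut {A B C} : A |- B -> B |- C -> A |- C.
Proof. intros AB BC. exact (r_cut s [A] [] [] B C AB BC). Qed.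

Lemma and_left1 A B C : A |- C -> And A B |- C.
Proof. exact (r_andL1 s [] [] A B C). Qed.

Lemma and_left2 A B C : B |- C -> And A B |- C.
Proof. exact (r_andL2 s [] [] A B C). Qed.

Lemma or_left A B C : A |- C -> B |- C -> Or A B |- C.
Proof. exact (r_orL s [] [] A B C). Qed.

Lemma bot_left A : Bot |- A.
Proof. exact (ax_bot s [] [] A). Qed.

Lemma and_left_iff A B C : derives s [A; B] C <-> And A B |- C.
Proof.
  split; intros H.
  - apply (r_contr s [] [] (And A B) C), (r_andL1 s [] [And A B] A B C).
    exact (r_andL2 s [A] [] A B C H).
  - apply (r_cut s [A; B] [] [] (And A B) C); [apply r_andR | exact H].
    + apply (r_weak s [A] [] B A), ax_id.
    + apply (r_weak s [] [B] A B), ax_id.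
Qed.

Lemma and_or_distr A B C : And (Or A B) C |- Or (And A C) (And B C).
Proof.
  apply and_left_iff, (r_orL s [] [C] A B).
  - apply r_orR1, and_left_iff, ax_id.
  - apply r_orR2, and_left_iff, ax_id.
Qed.

(* [Top -> _] is right adjoint to [Nab], so [Nab] preserves joins. *)
Lemma nab_or A B : Nab (Or A B) |- Or (Nab A) (Nab B).
Proof.
  set (C := Or (Nab A) (Nab B)).
  apply (seq_cut (B := Nab (Imp Top C))).
  - apply r_nab, or_left; apply (r_impR s [_]), (r_weak s [] [_] Top); cbn.
    + apply r_orR1, ax_id.
    + apply r_orR2, ax_id.
  - exact (r_impL s [] [] [] Top C C (ax_top s []) (ax_id s C)).
Qed.

Lemma nab_bot : Nab Bot |- Bot.
Proof.
  apply (seq_cut (B := Nab (Imp Top Bot))).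
  - apply r_nab, bot_left.
  - exact (r_impL s [] [] [] Top Bot Bot (ax_top s []) (ax_id s Bot)).
Qed.

Lemma tens_of_and A B : And A B |- Tens A B.
Proof. apply and_left_iff, (r_tensR s [A] [B]); apply ax_id. Qed.

Lemma tens_left1 A B : Tens A B |- A.
Proof. apply (r_tensL s [] []), (r_weak s [A] []), ax_id. Qed.

Lemma tens_left2 A B : Tens A B |- B.
Proof. apply (r_tensL s [] []), (r_weak s [] [B]), ax_id. Qed.

Lemma imp_elim A B : And (Nab (Imp A B)) A |- B.
Proof.
  apply and_left_iff, (r_exch s [] [] A (Nab (Imp A B)) B).
  exact (r_impL s [A] [] [] A B B (ax_id s A) (ax_id s B)).
Qed.

Lemma imp_intro A B C : And A (Nab C) |- B -> C |- Imp A B.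
Proof. intros H. apply (r_impR s [C]), and_left_iff, H. Qed.

Lemma provable_iff_top A : provable s A <-> Top |- A.
Proof.
  split; intros H.
  - exact (r_weak s [] [] Top A H).
  - exact (r_cut s [] [] [] Top A (ax_top s []) H).
Qed.

End DerivedRules.

Inductive closure (op : formula -> formula -> formula) (unit : formula)
    (D : formula -> Prop) : formula -> Prop :=
| cl_unit : closure op unit D unit
| cl_in C : D C -> closure op unit D C
| cl_op C1 C2 : closure op unit D C1 -> closure op unit D C2 -> closure op unit D (op C1 C2).

Definition conjs := closure And Top.
Definition disjs := closure Or Bot.

Definition extend (D : formula -> Prop) (C : formula) : formula -> Prop :=
  fun x => D x \/ x = C.

Lemma closure_mono op unit D D' : subset D D' -> subset (closure op unit D) (closure op unit D').
Proof. intros DD' x; induction 1; [apply cl_unit | apply cl_in, DD' | apply cl_op]; auto. Qed.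

Lemma closure_closed op unit (D : formula -> Prop) :
  D unit -> (forall C1 C2, D C1 -> D C2 -> D (op C1 C2)) -> subset (closure op unit D) D.
Proof. intros Du Dop x; induction 1; auto. Qed.

Lemma closure_chain op unit (D : nat -> formula -> Prop) :
  (forall n m, n <= m -> subset (D n) (D m)) ->
  forall C, closure op unit (fun x => exists n, D n x) C -> exists n, closure op unit (D n) C.
Proof.
  intros mono C; induction 1 as [|C [n HC]|C1 C2 _ [n1 H1] _ [n2 H2]].
  - exists 0; constructor.
  - exists n; now constructor.
  - exists (max n1 n2); apply cl_op.
    + eapply closure_mono; [| exact H1]; apply mono; lia.
    + eapply closure_mono; [| exact H2]; apply mono; lia.
Qed.

Section Consistency.

Variable s : scheme.
Local Notation "A |- B" := (derives s [A] B) (at level 70).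

Lemma conjs_right A (D : formula -> Prop) :
  (forall C, D C -> A |- C) -> forall C, conjs D C -> A |- C.
Proof. intros AD C; induction 1; auto using ax_top, r_andR. Qed.

Lemma disjs_left B (T : formula -> Prop) :
  (forall C, T C -> C |- B) -> forall C, disjs T C -> C |- B.
Proof. intros TB C; induction 1; auto using bot_left, or_left. Qed.

Lemma conjs_extend D C x :
  conjs (extend D C) x -> exists y, conjs D y /\ And C y |- x.
Proof.
  induction 1 as [|x [Dx| ->]|x1 x2 _ [y1 [H1 K1]] _ [y2 [H2 K2]]].
  - exists Top; split; [constructor | apply ax_top].
  - exists x; split; [now constructor | apply and_left2, ax_id].
  - exists Top; split; [constructor | apply and_left1, ax_id].
  - exists (And y1 y2); split; [now constructor |].
    apply r_andR; [eapply seq_cut, K1 | eapply seq_cut, K2]; apply r_andR;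
      auto using and_left1, and_left2, ax_id.
Qed.

Lemma disjs_extend T C x :
  disjs (extend T C) x -> exists y, disjs T y /\ x |- Or C y.
Proof.
  induction 1 as [|x [Tx| ->]|x1 x2 _ [y1 [H1 K1]] _ [y2 [H2 K2]]].
  - exists Bot; split; [constructor | apply bot_left].
  - exists x; split; [now constructor | apply r_orR2, ax_id].
  - exists Bot; split; [constructor | apply r_orR1, ax_id].
  - exists (Or y1 y2); split; [now constructor |].
    apply or_left; [eapply seq_cut; [exact K1 |] | eapply seq_cut; [exact K2 |]];
      apply or_left; auto using r_orR1, r_orR2, ax_id.
Qed.

Definition consistent (D T : formula -> Prop) : Prop :=
  ~ exists C E, conjs D C /\ disjs T E /\ C |- E.

Lemma consistent_sep D T C E : consistent D T -> conjs D C -> disjs T E -> ~ C |- E.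
Proof. intros DT DC TE CE. apply DT; now exists C, E. Qed.

Lemma consistent_extend D T C :
  consistent D T -> consistent (extend D C) T \/ consistent D (extend T C).
Proof.
  (* Cutting [C] between [And C d1 |- e1] and [x2 |- Or C f2] refutes [(D, T)]. *)
  intros DT. apply NNPP; intros [inconsD inconsT]%not_or_and.
  apply NNPP in inconsD as [x1 [e1 [Dx1 [Te1 x1e1]]]].
  apply NNPP in inconsT as [x2 [e2 [Dx2 [Te2 x2e2]]]].
  apply conjs_extend in Dx1 as [d1 [Dd1 Cd1]].
  apply disjs_extend in Te2 as [f2 [Tf2 e2Cf2]].
  apply (consistent_sep D T (And x2 d1) (Or f2 e1) DT); [now apply cl_op .. |].
  apply (seq_cut (B := And (Or C f2) d1)).
  - apply r_andR; [apply and_left1, (seq_cut x2e2 e2Cf2) | apply and_left2, ax_id].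
  - eapply seq_cut; [apply and_or_distr | apply or_left].
    + apply r_orR2, (seq_cut Cd1 x1e1).
    + apply r_orR1, and_left1, ax_id.
Qed.

End Consistency.

Record prime_theory (s : scheme) (P : formula -> Prop) : Prop := {
  pt_closed C D : P C -> derives s [C] D -> P D;
  pt_and C D : P C -> P D -> P (And C D);
  pt_top : P Top;
  pt_not_bot : ~ P Bot;
  pt_or C D : P (Or C D) -> P C \/ P D
}.

Lemma prime_of_complete s P T :
  consistent s P T -> (forall C, P C \/ T C) -> prime_theory s P.
Proof.
  intros PT total.
  pose proof (fun C E => consistent_sep s P T C E PT) as sep.
  split.
  - intros C D PC CD. destruct (total D) as [|TD]; [assumption |].
    now destruct (sep C D (cl_in _ _ _ _ PC) (cl_in _ _ _ _ TD)).
  - intros C D PC PD. destruct (total (And C D)) as [|TCD]; [assumption |].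
    destruct (sep (And C D) (And C D));
      [apply cl_op; now apply cl_in | now apply cl_in | apply ax_id].
  - destruct (total Top) as [|TTop]; [assumption |].
    destruct (sep Top Top); [apply cl_unit | now apply cl_in | apply ax_id].
  - intros PBot. destruct (sep Bot Bot); [now apply cl_in | apply cl_unit | apply ax_id].
  - intros C D PCD. destruct (total C) as [|TC]; [now left |].
    destruct (total D) as [|TD]; [now right |].
    destruct (sep (Or C D) (Or C D));
      [now apply cl_in | apply cl_op; now apply cl_in | apply ax_id].
Qed.

Section PrimeTheory.

Variables (s : scheme) (P : formula -> Prop).
Hypothesis HP : prime_theory s P.

Lemma prime_provable C : provable s C -> P C.
Proof. intros HC. apply (pt_closed _ _ HP Top); [apply HP | now apply provable_iff_top]. Qed.

Lemma prime_and_iff A B : P (And A B) <-> P A /\ P B.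
Proof.
  split; [intros PAB; split | intros [PA PB]; now apply HP].
  - apply (pt_closed _ _ HP _ _ PAB), and_left1, ax_id.
  - apply (pt_closed _ _ HP _ _ PAB), and_left2, ax_id.
Qed.

Lemma prime_tens_iff A B : P (Tens A B) <-> P A /\ P B.
Proof.
  rewrite <- prime_and_iff. split; intros H; apply (pt_closed _ _ HP _ _ H).
  - apply r_andR; [apply tens_left1 | apply tens_left2].
  - apply tens_of_and.
Qed.

Lemma prime_or_iff A B : P (Or A B) <-> P A \/ P B.
Proof.
  split; [now apply HP |].
  intros [PA | PB]; [apply (pt_closed _ _ HP _ _ PA) | apply (pt_closed _ _ HP _ _ PB)];
    auto using r_orR1, r_orR2, ax_id.
Qed.

End PrimeTheory.

Section Lindenbaum.

Variables (s : scheme) (D T : formula -> Prop).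
Hypothesis DT : consistent s D T.

Fixpoint stage (n : nat) : (formula -> Prop) * (formula -> Prop) :=
  match n with
  | 0 => (D, T)
  | S m =>
      let (D', T') := stage m in
      if excluded_middle_informative (consistent s (extend D' (decode m)) T')
      then (extend D' (decode m), T') else (D', extend T' (decode m))
  end.

Lemma stage_consistent n : consistent s (fst (stage n)) (snd (stage n)).
Proof.
  induction n as [|n IH]; cbn; [exact DT |].
  destruct (stage n) as [D' T']; cbn in IH.
  destruct excluded_middle_informative as [|incons]; [assumption |].
  now destruct (consistent_extend s D' T' (decode n) IH).
Qed.

Lemma stage_mono n m : n <= m ->
  subset (fst (stage n)) (fst (stage m)) /\ subset (snd (stage n)) (snd (stage m)).
Proof.
  induction 1 as [|m _ [IHD IHT]]; [split; now intro |]. cbn.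
  destruct (stage m) as [D' T']; cbn in IHD, IHT.
  destruct excluded_middle_informative; split; intros x Hx; cbn; unfold extend; auto.
Qed.

Lemma stage_decides n : fst (stage (S n)) (decode n) \/ snd (stage (S n)) (decode n).
Proof.
  cbn; destruct (stage n) as [D' T'].
  destruct excluded_middle_informative; cbn; unfold extend; auto.
Qed.

Theorem lindenbaum :
  exists P, prime_theory s P /\ subset D P /\ (forall C, T C -> ~ P C).
Proof.
  set (P := fun x => exists n, fst (stage n) x).
  set (Q := fun x => exists n, snd (stage n) x).
  assert (monoD : forall n m, n <= m -> subset (fst (stage n)) (fst (stage m)))
    by (intros; now apply stage_mono).
  assert (monoT : forall n m, n <= m -> subset (snd (stage n)) (snd (stage m)))
    by (intros; now apply stage_mono).
  assert (PQ : consistent s P Q).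
  { intros [C [E [[n1 PC]%(closure_chain _ _ _ monoD)
                   [[n2 QE]%(closure_chain _ _ _ monoT) CE]]]].
    apply (stage_consistent (max n1 n2)); exists C, E; repeat split; [| | exact CE].
    - eapply closure_mono; [| exact PC]; apply monoD; lia.
    - eapply closure_mono; [| exact QE]; apply monoT; lia. }
  exists P; split; [| split].
  - apply (prime_of_complete s P Q PQ). intros C.
    rewrite <- (decode_encode C).
    destruct (stage_decides (encode C)); [left | right]; eexists; eassumption.
  - intros C DC; exists 0; exact DC.
  - intros C TC PC. apply (consistent_sep s P Q C C PQ); [now apply cl_in | | apply ax_id].
    apply cl_in; exists 0; exact TC.
Qed.

End Lindenbaum.

Definition nab_succ (P Q : formula -> Prop) : Prop := forall C, P C -> Q (Nab C).

Section PrimeWitnesses.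

Variable s : scheme.
Local Notation "A |- B" := (derives s [A] B) (at level 70).

Lemma prime_avoiding A : ~ provable s A -> exists P, prime_theory s P /\ ~ P A.
Proof.
  intros notA.
  destruct (lindenbaum s (fun _ => False) (eq A)) as [P [HP [_ PA]]].
  - intros [C [E [DC [TE CE]]]]. apply notA, provable_iff_top.
    apply (seq_cut (B := C)); [| apply (seq_cut CE)].
    + apply (conjs_right s Top (fun _ => False)); [contradiction | exact DC].
    + apply (disjs_left s A (eq A)); [intros ? <-; apply ax_id | exact TE].
  - exists P; auto.
Qed.

Lemma prime_nab_witness Q A : prime_theory s Q -> Q (Nab A) ->
  exists P, prime_theory s P /\ P A /\ nab_succ P Q.
Proof.
  intros HQ QA.
  set (T := fun C => ~ Q (Nab C)).
  assert (T_disjs : subset (disjs T) T).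
  { apply closure_closed.
    - intros QBot. apply (pt_not_bot _ _ HQ), (pt_closed _ _ HQ _ _ QBot), nab_bot.
    - intros C1 C2 T1 T2 Q12.
      destruct (pt_or _ _ HQ (Nab C1) (Nab C2)); auto.
      apply (pt_closed _ _ HQ _ _ Q12), nab_or. }
  destruct (lindenbaum s (eq A) T) as [P [HP [AP TP]]].
  - intros [C [E [DC [TE CE]]]]. apply (T_disjs E TE).
    apply (pt_closed _ _ HQ _ _ QA), r_nab, (seq_cut (B := C)); [| exact CE].
    apply (conjs_right s A (eq A)); [intros ? <-; apply ax_id | exact DC].
  - exists P; split; [exact HP | split; [now apply AP |]].
    intros C PC. apply NNPP; intros notQ. exact (TP C notQ PC).
Qed.

Lemma conjs_nab_image P y : prime_theory s P ->
  conjs (fun x => exists C, P C /\ x = Nab C) y -> exists G, P G /\ Nab G |- y.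
Proof.
  intros HP; induction 1 as [|x [C [PC ->]]|y1 y2 _ [G1 [P1 K1]] _ [G2 [P2 K2]]].
  - exists Top; split; [apply HP | apply ax_top].
  - exists C; split; [exact PC | apply ax_id].
  - exists (And G1 G2); split; [now apply HP |].
    apply r_andR; [apply (seq_cut (B := Nab G1)) | apply (seq_cut (B := Nab G2))];
      auto using r_nab, and_left1, and_left2, ax_id.
Qed.

Lemma prime_imp_witness P A B : prime_theory s P -> ~ P (Imp A B) ->
  exists Q, prime_theory s Q /\ nab_succ P Q /\ Q A /\ ~ Q B.
Proof.
  intros HP notAB.
  set (N := fun x => exists C, P C /\ x = Nab C).
  destruct (lindenbaum s (extend N A) (eq B)) as [Q [HQ [NQ BQ]]].
  - intros [C [E [[y [Ny AyC]]%(conjs_extend s) [TE CE]]]].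
    destruct (conjs_nab_image P y HP Ny) as [G [PG Gy]].
    apply notAB, (pt_closed _ _ HP G _ PG), imp_intro.
    apply (seq_cut (B := And A y)); [apply r_andR; auto using and_left1, and_left2, ax_id |].
    apply (seq_cut AyC), (seq_cut CE).
    apply (disjs_left s B (eq B)); [intros ? <-; apply ax_id | exact TE].
  - exists Q; split; [exact HQ | split; [| split]].
    + intros C PC. apply NQ; left; now exists C.
    + apply NQ; now right.
    + now apply BQ.
Qed.

Lemma prime_serial P : s = SchwF -> prime_theory s P -> exists Q, prime_theory s Q /\ nab_succ P Q.
Proof.
  intros wF HP. destruct (prime_imp_witness P Top Bot HP) as [Q [HQ [PQ _]]].
  - intros PTopBot. apply (pt_not_bot _ _ HP), (pt_closed _ _ HP _ _ PTopBot), r_wF; [exact wF |].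
    exact (r_impL s [] [] [] Top Bot Bot (ax_top s []) (ax_id s Bot)).
  - now exists Q.
Qed.

Lemma prime_reflexive P : s = SchF -> prime_theory s P -> nab_succ P P.
Proof. intros F HP C PC. apply (pt_closed _ _ HP _ _ PC), r_F; [exact F | apply ax_id]. Qed.

End PrimeWitnesses.

Section RelationalSemantics.

Context {X : Type} (R : X -> X -> Prop).

Definition image_op (W : X -> Prop) : X -> Prop := fun y => exists x, W x /\ R x y.

Lemma image_op_union_preserving : union_preserving image_op.
Proof.
  intros I F. apply functional_extensionality; intros y.
  apply propositional_extensionality; unfold image_op.
  split; [intros [x [[i Fx] Rxy]] | intros [i [x [Fx Rxy]]]]; eauto.
Qed.

Lemma box_image_op W x : box image_op W x <-> forall y, R x y -> W y.
Proof.
  split.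
  - intros [U [UW Ux]] y Rxy. apply UW; now exists x.
  - intros H. exists (eq x); split; [| reflexivity].
    intros y [? [<- Rxy]]. auto.
Qed.

Lemma in_class_image_op s :
  (s = SchF -> forall x, R x x) -> (s = SchwF -> forall x, exists y, R x y) ->
  in_class s image_op.
Proof.
  intros refl serial; split; [exact image_op_union_preserving |].
  destruct s.
  - exact I.
  - intros W x Wx. exists x; auto.
  - intros W empty x Wx. destruct (serial eq_refl x) as [y Rxy].
    apply (empty y); now exists x.
Qed.

End RelationalSemantics.

Section CanonicalModel.

Variables (s : scheme) (X : Type) (f : (nat -> bool) -> X).
Hypothesis f_inj : forall a b, f a = f b -> a = b.

Definition theory_at (x : X) : formula -> Prop :=
  fun A => exists a, f a = x /\ a (encode A) = true.

Definition point_of (T : formula -> Prop) : X :=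
  f (fun n => if excluded_middle_informative (exists A, encode A = n /\ T A) then true else false).

Lemma theory_at_point_of T : theory_at (point_of T) = T.
Proof.
  apply functional_extensionality; intros A; apply propositional_extensionality.
  unfold theory_at, point_of; split.
  - intros [a [->%f_inj code_A]].
    destruct excluded_middle_informative as [[B [EB TB]] |]; [| discriminate].
    now rewrite <- (encode_inj _ _ EB).
  - intros TA; eexists; split; [reflexivity | cbv beta].
    destruct excluded_middle_informative as [| notT]; [reflexivity |].
    contradict notT; now exists A.
Qed.

Definition canonical (x : X) : Prop := prime_theory s (theory_at x).

(* Non-canonical points are made reflexive, so that the frame is reflexive
   (for (F)) and serial (for (wF)) everywhere. *)
Definition canonical_rel (x y : X) : Prop :=
  (canonical x /\ canonical y /\ nab_succ (theory_at x) (theory_at y)) \/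
  (~ canonical x /\ x = y).

Lemma canonical_point_of T : prime_theory s T -> canonical (point_of T).
Proof. intros HT; unfold canonical; now rewrite theory_at_point_of. Qed.

Lemma canonical_rel_point_of x T :
  canonical x -> prime_theory s T -> nab_succ (theory_at x) T -> canonical_rel x (point_of T).
Proof.
  intros Cx HT xT; left; split; [exact Cx | split; [now apply canonical_point_of |]].
  now rewrite theory_at_point_of.
Qed.

Definition canonical_nab : (X -> Prop) -> X -> Prop := image_op canonical_rel.

Lemma canonical_in_class : in_class s canonical_nab.
Proof.
  apply in_class_image_op.
  - intros F x. destruct (classic (canonical x)) as [Cx | notC]; [left | now right].
    split; [exact Cx | split; [exact Cx | now apply (prime_reflexive s)]].
  - intros wF x. destruct (classic (canonical x)) as [Cx | notC]; [| now exists x; right].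
    destruct (prime_serial s _ wF Cx) as [Q [HQ xQ]].
    exists (point_of Q); now apply canonical_rel_point_of.
Qed.

Section Truth.

Variables (W1 W2 : X -> Prop) (A B : formula).
Hypothesis W1A : forall x, canonical x -> W1 x <-> theory_at x A.
Hypothesis W2B : forall x, canonical x -> W2 x <-> theory_at x B.

Lemma truth_nab x : canonical x -> canonical_nab W1 x <-> theory_at x (Nab A).
Proof.
  intros Cx; split.
  - intros [y [W1y [[Cy [_ yx]] | [notCy ->]]]]; [| contradiction].
    apply yx, W1A; assumption.
  - intros xNabA. destruct (prime_nab_witness s _ A Cx xNabA) as [P [HP [PA Px]]].
    exists (point_of P); split.
    + apply W1A; [now apply canonical_point_of |]. now rewrite theory_at_point_of.
    + left; split; [now apply canonical_point_of | split; [exact Cx |]].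
      now rewrite theory_at_point_of.
Qed.

Lemma truth_imp x : canonical x -> st_imp canonical_nab W1 W2 x <-> theory_at x (Imp A B).
Proof.
  intros Cx; unfold st_imp, canonical_nab; rewrite box_image_op; unfold heyting_imp; split.
  - intros H. apply NNPP; intros notAB.
    destruct (prime_imp_witness s _ A B Cx notAB) as [Q [HQ [xQ [QA notQB]]]].
    pose proof (canonical_point_of Q HQ) as Cy.
    apply notQB; rewrite <- (theory_at_point_of Q).
    apply W2B, H, W1A; [exact Cy | now apply canonical_rel_point_of | exact Cy |].
    now rewrite theory_at_point_of.
  - intros xAB y [[_ [Cy xy]] | [notCx _]] W1y; [| contradiction].
    apply W2B; [exact Cy |].
    apply (pt_closed _ _ Cy (And (Nab (Imp A B)) A)); [| apply imp_elim].
    apply (prime_and_iff _ _ Cy); split; [now apply xy | now apply W1A].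
Qed.

End Truth.

Lemma truth_lemma A x :
  canonical x -> interp canonical_nab (fun n y => theory_at y (Var n)) A x <-> theory_at x A.
Proof.
  revert x; induction A; intros x Cx; cbn [interp].
  - reflexivity.
  - split; [intros _; apply (prime_provable _ _ Cx), ax_one | auto].
  - split; [intros _; apply Cx | auto].
  - split; [contradiction | apply Cx].
  - rewrite (prime_and_iff _ _ Cx), IHA1, IHA2 by exact Cx; reflexivity.
  - rewrite (prime_or_iff _ _ Cx), IHA1, IHA2 by exact Cx; reflexivity.
  - rewrite (prime_tens_iff _ _ Cx), IHA1, IHA2 by exact Cx; reflexivity.
  - now apply truth_imp.
  - now apply truth_nab.
Qed.

End CanonicalModel.

Theorem completeness s X A : card_ge_continuum X -> valid_on X s A -> provable s A.
Proof.
  intros [f f_inj] valid. apply NNPP; intros notA.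
  destruct (prime_avoiding s A notA) as [P [HP notPA]].
  apply notPA; rewrite <- (theory_at_point_of X f f_inj P).
  apply (truth_lemma s X f f_inj); [now apply canonical_point_of |].
  apply valid, canonical_in_class, f_inj.
Qed.

Theorem theorem8p11 (X : Type) (hX : card_ge_continuum X) (A : formula) :
  (valid_on X NoScheme A -> provable NoScheme A) /\
  (valid_on X SchF A -> provable SchF A) /\
  (valid_on X SchwF A -> provable SchwF A).
Proof. split; [| split]; now apply completeness. Qed.
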